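(* Let $T\in(0,\infty]$ and let $u(x,t)=(u_1,u_2)$, $x=(x_1,x_2)\in\mathbb{R}^2$, $t\in[0,T)$, be a smooth divergence-free velocity field, $u=\nabla^{\perp}\psi=\left(-\frac{\partial\psi}{\partial x_2},\frac{\partial\psi}{\partial x_1}\right)$ for a smooth stream function $\psi$. Suppose $[a,b]$ ($a<b$) and $f_\pm\in C^1([a,b]\times[0,T))$ satisfy: (i) $f_-(x_1,t)<f_+(x_1,t)$ for all $x_1\in[a,b]$, $t\in[0,T)$; (ii) $u_2(x_1,x_2,t)=\frac{\partial f_\pm}{\partial x_1}(x_1,t)\,u_1(x_1,x_2,t)+\frac{\partial f_\pm}{\partial t}(x_1,t)$ at $x_2=f_\pm(x_1,t)$ for all $x_1\in[a,b]$, $t\in[0,T)$ (the arcs $x_2=f_\pm(x_1,t)$ move with the fluid); and (iii) the velocity growth is controlled: $$\int_0^T\sup\{|u(x_1,x_2,t)|: x_1\in[a,b],\ f_-(x_1,t)\le x_2\le f_+(x_1,t)\}\,dt<\infty.$$ Then it is not the case that both $f_+(x_1,t)-f_-(x_1,t)$ is bounded on $[a,b]\times[0,T)$ and $\lim_{t\to T^-}(f_+(x_1,t)-f_-(x_1,t))=0$ for every $x_1\in[a,b]$; that is, a sharp front cannot develop at time $T$.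
   Context: A sharp front at time $T$ means the existence of $[a,b]$, $f_\pm$ as in (i)–(ii) such that moreover $f_+-f_-$ is bounded on $[a,b]\times[0,T)$ and $\lim_{t\to T^-}(f_+(x_1,t)-f_-(x_1,t))=0$ for all $x_1\in[a,b]$. The spatial domain may be $\mathbb{R}^2$ or the torus $\mathbb{R}^2/\mathbb{Z}^2$. *)

From Stdlib Require Import Reals List.
From Coquelicot Require Import Coquelicot.
Open Scope R_scope.

Definition pd3 (i : nat) (g : R -> R -> R -> R) : R -> R -> R -> R :=
  fun x y t =>
    match i with
    | O => Derive (fun z => g z y t) x
    | S O => Derive (fun z => g x z t) y
    | _ => Derive (fun z => g x y z) t
    end.

Definition ex_pd3 (i : nat) (g : R -> R -> R -> R) (x y t : R) : Prop :=
  match i with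
  | O => ex_derive (fun z => g z y t) x
  | S O => ex_derive (fun z => g x z t) y
  | _ => ex_derive (fun z => g x y z) t
  end.

Fixpoint iter_pd3 (l : list nat) (g : R -> R -> R -> R) : R -> R -> R -> R :=
  match l with
  | nil => g
  | i :: l' => pd3 i (iter_pd3 l' g)
  end.

Definition uncurry3 (g : R -> R -> R -> R) (p : R * R * R) : R :=
  g (fst (fst p)) (snd (fst p)) (snd p).

Definition smooth3_on (O : R * R * R -> Prop) (g : R -> R -> R -> R) : Prop :=
  open O /\
  forall (l : list nat) (x y t : R), O (x, y, t) ->
    continuous (uncurry3 (iter_pd3 l g)) (x, y, t) /\
    forall i : nat, ex_pd3 i (iter_pd3 l g) x y t.

Definition uncurry2 (g : R -> R -> R) (p : R * R) : R := g (fst p) (snd p).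

Definition d_x1 (f : R -> R -> R) : R -> R -> R :=
  fun x t => Derive (fun z => f z t) x.
Definition d_t (f : R -> R -> R) : R -> R -> R :=
  fun x t => Derive (fun z => f x z) t.

Definition C1_2_on (O : R * R -> Prop) (f : R -> R -> R) : Prop :=
  open O /\
  forall x t : R, O (x, t) ->
    continuous (uncurry2 f) (x, t) /\
    ex_derive (fun z => f z t) x /\ ex_derive (fun z => f x z) t /\
    continuous (uncurry2 (d_x1 f)) (x, t) /\
    continuous (uncurry2 (d_t f)) (x, t).

Definition in_time (T : Rbar) (t : R) : Prop := 0 <= t /\ Rbar_lt (Finite t) T.

(** Smooth on R^2 x [0,T) : restriction of a smooth function on an open
    neighbourhood of R^2 x [0,T) (standard definition on non-open sets). *)
Definition smooth_on_strip (T : Rbar) (psi : R -> R -> R -> R) : Prop :=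
  exists O : R * R * R -> Prop,
    (forall x y t, in_time T t -> O (x, y, t)) /\ smooth3_on O psi.

Definition C1_on_rect (a b : R) (T : Rbar) (f : R -> R -> R) : Prop :=
  exists O : R * R -> Prop,
    (forall x t, a <= x <= b -> in_time T t -> O (x, t)) /\ C1_2_on O f.

Definition vel1 (psi : R -> R -> R -> R) : R -> R -> R -> R := fun x y t => - pd3 1 psi x y t.
Definition vel2 (psi : R -> R -> R -> R) : R -> R -> R -> R := fun x y t => pd3 0 psi x y t.
Definition vel_norm (psi : R -> R -> R -> R) (x y t : R) : R :=
  sqrt (vel1 psi x y t ^ 2 + vel2 psi x y t ^ 2).

Definition vel_sup (psi : R -> R -> R -> R) (a b : R) (fm fp : R -> R -> R) (t : R) : R :=
  real (Lub_Rbar (fun r => exists x1 x2, a <= x1 <= b /\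
          fm x1 t <= x2 <= fp x1 t /\ r = vel_norm psi x1 x2 t)).

Definition lim_left_at (h : R -> R) (T : Rbar) (l : R) : Prop :=
  forall eps : R, 0 < eps -> exists s : R, 0 <= s /\ Rbar_lt (Finite s) T /\
    forall t : R, s < t -> Rbar_lt (Finite t) T -> Rabs (h t - l) < eps.

From Stdlib Require Import Reals List Lra Classical.
From Coquelicot Require Import Coquelicot.
From mathcomp Require all_boot all_order all_algebra all_classical all_reals all_analysis.
From mathcomp Require Rstruct Rstruct_topology.
Open Scope R_scope.

(* Let h = f_+ - f_- be the thickness of the front and U(t) the velocity
   supremum of (iii).  Since the arcs x2 = f_pm(x1, t) move with the fluid,
   d/dx1 psi(x1, f_pm(x1, t), t) = d f_pm / dt, so the area
   int_p^q h(x1, t) dx1 over a fixed interval changes at the rate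
   F(q, t) - F(p, t), where F(x1, t) = psi(x1, f_+, t) - psi(x1, f_-, t) is the
   flux between the arcs, and |F| <= U h by the mean value theorem in x2.
   Widening the interval at speed U on both sides gains area at rate at least
   U h at each end, which beats the flux: the area over such a widening window
   is nondecreasing.  By (iii) the window can be started late enough to stay
   inside [a, b], so int_a^b h(x1, t) dx1 is bounded below by a positive
   constant near T, whereas a sharp front makes it tend to 0 by bounded
   convergence. *)

(** * Real analysis on segments *)

Lemma cousin (P : R -> R -> Prop) (a b : R) : a <= b ->
  (forall u v w, u <= v -> v <= w -> P u v -> P v w -> P u w) ->
  (forall x, a <= x <= b -> exists d, 0 < d /\
     forall u v, x - d < u -> u <= x -> x <= v -> v < x + d -> P u v) ->
  P a b.
Proof.
intros ab Htrans Hloc.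
set (E := fun s => a <= s <= b /\ P a s).
assert (Ea : E a).
{ split; [lra|]. destruct (Hloc a) as [d [d0 Hd]]; [lra|]. apply Hd; lra. }
destruct (completeness E) as [c [Hub Hlub]].
{ exists b. intros s [Hs _]. lra. }
{ exists a; exact Ea. }
assert (ac : a <= c) by (apply Hub; exact Ea).
assert (cb : c <= b) by (apply Hlub; intros s [Hs _]; lra).
destruct (Hloc c) as [d [d0 Hd]]; [lra|].
assert (Hs : exists s, E s /\ c - d < s).
{ apply NNPP; intro Hn.
  enough (c <= c - d) by lra.
  apply Hlub; intros s Es.
  destruct (Rle_dec s (c - d)); [assumption|].
  exfalso; apply Hn; exists s; split; [assumption|lra]. }
destruct Hs as [s [[Hs Pas] Hsd]].
assert (sc : s <= c) by (apply Hub; split; assumption).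
assert (Pac : P a c) by (apply (Htrans a s c); try lra; [assumption|apply Hd; lra]).
destruct (Rle_dec b c) as [bc|bc].
{ replace b with c by lra; exact Pac. }
set (v := Rmin b (c + d / 2)).
assert (cv : c < v) by (unfold v; apply Rmin_case; lra).
assert (vd : v < c + d) by (unfold v; apply Rle_lt_trans with (c + d / 2); [apply Rmin_r|lra]).
assert (Ev : E v).
{ split; [split; [lra|apply Rmin_l]|].
  apply (Htrans a c v); try lra; [assumption|apply Hd; lra]. }
assert (v <= c) by (apply Hub; exact Ev). lra.
Qed.

Lemma segment_uniform (S : R -> R -> R -> Prop) (a b : R) : a <= b ->
  (forall x d M d' M', S x d M -> 0 < d' -> d' <= d -> M <= M' -> S x d' M') ->
  (forall x, a <= x <= b -> exists r d M, 0 < r /\ 0 < d /\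
     forall x', x - r < x' < x + r -> S x' d M) ->
  exists d M, 0 < d /\ forall x, a <= x <= b -> S x d M.
Proof.
intros ab Hmono Hloc.
apply (cousin (fun u v => exists d M, 0 < d /\ forall x, u <= x <= v -> S x d M)); [exact ab| |].
- intros u v w uv vw [d1 [M1 [d10 H1]]] [d2 [M2 [d20 H2]]].
  exists (Rmin d1 d2), (Rmax M1 M2); split; [apply Rmin_case; assumption|].
  intros x Hx. destruct (Rle_dec x v).
  + apply (Hmono x d1 M1); [apply H1; lra | apply Rmin_case; lra | apply Rmin_l | apply Rmax_l].
  + apply (Hmono x d2 M2); [apply H2; lra | apply Rmin_case; lra | apply Rmin_r | apply Rmax_r].
- intros x Hx. destruct (Hloc x Hx) as [r [d [M [r0 [d0 H]]]]].
  exists r; split; [assumption|]. intros u v H1 H2 H3 H4.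
  exists d, M; split; [assumption|]. intros y Hy. apply H; lra.
Qed.

Lemma nondecreasing_of_locally (phi : R -> R) (p q : R) : p <= q ->
  (forall s, p <= s <= q -> exists d, 0 < d /\ forall u v,
     s - d < u -> u <= s -> s <= v -> v < s + d -> p <= u -> v <= q -> phi u <= phi v) ->
  phi p <= phi q.
Proof.
intros pq Hloc.
apply (cousin (fun u v => p <= u -> v <= q -> phi u <= phi v)); try lra.
- intros u v w uv vw Huv Hvw pu wq.
  apply Rle_trans with (phi v); [apply Huv|apply Hvw]; lra.
- exact Hloc.
Qed.

Lemma continuous_eps (f : R -> R) x : continuous f x ->
  forall eps, 0 < eps -> exists d, 0 < d /\ forall y, Rabs (y - x) < d -> Rabs (f y - f x) < eps.
Proof.
intros Hc eps e0.
destruct (proj1 (filterlim_locally _ _) Hc (mkposreal eps e0)) as [d Hd].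
exists d; split; [apply cond_pos|exact Hd].
Qed.

Lemma continuous2_eps (G : R -> R -> R) x t :
  continuous (uncurry2 G) (x, t) ->
  forall eps, 0 < eps -> exists d, 0 < d /\ forall x' t',
    Rabs (x' - x) < d -> Rabs (t' - t) < d -> Rabs (G x' t' - G x t) < eps.
Proof.
intros Hc eps e0.
destruct (proj1 (filterlim_locally _ _) Hc (mkposreal eps e0)) as [d Hd].
exists d; split; [apply cond_pos|].
intros x' t' Hx Ht. exact (Hd (x', t') (conj Hx Ht)).
Qed.

Lemma continuous_pair {U V W : UniformSpace} (f : U -> V) (g : U -> W) (x : U) :
  continuous f x -> continuous g x -> continuous (fun z => (f z, g z)) x.
Proof.
intros Hf Hg. apply (continuous_comp_2 f g pair); [exact Hf|exact Hg|].
apply (continuous_ext (fun p => p)); [intros [u v]; reflexivity|apply continuous_id].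
Qed.

Lemma continuous_uncurry2_l (G : R -> R -> R) x t :
  continuous (uncurry2 G) (x, t) -> continuous (fun z => G z t) x.
Proof.
intros Hc. apply (continuous_comp (fun z => (z, t)) (uncurry2 G)); [|exact Hc].
apply continuous_pair; [apply continuous_id|apply continuous_const].
Qed.

Lemma continuous_uncurry2_r (G : R -> R -> R) x t :
  continuous (uncurry2 G) (x, t) -> continuous (fun z => G x z) t.
Proof.
intros Hc. apply (continuous_comp (fun z => (x, z)) (uncurry2 G)); [|exact Hc].
apply continuous_pair; [apply continuous_const|apply continuous_id].
Qed.

Lemma continuous_uncurry3_slice (G : R -> R -> R -> R) x y t :
  continuous (uncurry3 G) (x, y, t) -> continuous (uncurry2 (fun u v => G u v t)) (x, y).
Proof.
intros Hc. apply (continuous_comp (fun p => (p, t)) (uncurry3 G)); [|exact Hc].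
apply continuous_pair; [apply continuous_id|apply continuous_const].
Qed.

Lemma continuity_2d_pt_swap (G : R -> R -> R) x t :
  continuous (uncurry2 G) (x, t) -> continuity_2d_pt (fun u v => G v u) t x.
Proof.
intros Hc eps. destruct (continuous2_eps G x t Hc eps (cond_pos eps)) as [d [d0 Hd]].
exists (mkposreal d d0). intros u v Hu Hv. apply Hd; assumption.
Qed.

Lemma rectangle_bounded (G : R -> R -> R) a1 b1 a2 b2 : a1 <= b1 -> a2 <= b2 ->
  (forall x y, a1 <= x <= b1 -> a2 <= y <= b2 -> continuous (uncurry2 G) (x, y)) ->
  exists M, forall x y, a1 <= x <= b1 -> a2 <= y <= b2 -> Rabs (G x y) <= M.
Proof.
intros h1 h2 Hc.
assert (Hrow : forall x0, a1 <= x0 <= b1 -> exists d M, 0 < d /\ forall y, a2 <= y <= b2 ->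
          forall x, Rabs (x - x0) < d -> Rabs (G x y) <= M).
{ intros x0 hx.
  apply (segment_uniform (fun y d M => forall x, Rabs (x - x0) < d -> Rabs (G x y) <= M));
    [exact h2| |].
  - intros y d M d' M' H _ dd MM x Hx. apply Rle_trans with M; [apply H; lra|exact MM].
  - intros y hy. destruct (continuous2_eps G x0 y (Hc x0 y hx hy) 1 Rlt_0_1) as [d [d0 Hd]].
    exists d, d, (Rabs (G x0 y) + 1); split; [exact d0|split; [exact d0|]].
    intros y' hy' x Hx.
    assert (H := Hd x y' Hx ltac:(apply Rabs_def1; lra)).
    assert (H' := Rabs_triang_inv (G x y') (G x0 y)). lra. }
destruct (segment_uniform (fun x _ M => forall y, a2 <= y <= b2 -> Rabs (G x y) <= M) a1 b1)
  as [_ [M [_ HM]]]; [exact h1| | |].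
- intros x d M d' M' H _ _ MM y hy. apply Rle_trans with M; [apply H|]; assumption.
- intros x0 hx. destruct (Hrow x0 hx) as [d [M [d0 Hd]]].
  exists d, 1, M; split; [exact d0|split; [lra|]].
  intros x Hx y hy. apply Hd; [exact hy|apply Rabs_def1; lra].
- exists M. intros x y hx hy. apply HM; assumption.
Qed.

Lemma Lub_Rbar_real_ub (E : R -> Prop) (r0 M : R) : E r0 -> (forall r, E r -> r <= M) ->
  forall r, E r -> r <= real (Lub_Rbar E).
Proof.
intros H0 HM.
destruct (Lub_Rbar_correct E) as [Hub Hlub].
assert (Hle : Rbar_le (Lub_Rbar E) M) by (apply Hlub; intros r Er; apply HM, Er).
assert (Hge : Rbar_le r0 (Lub_Rbar E)) by (apply Hub, H0).
destruct (Lub_Rbar E) as [l| |]; simpl in *; try contradiction.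
intros r Er. apply (Hub r Er).
Qed.

Lemma RInt_ge_const (f : R -> R) (p q c : R) : p <= q -> ex_RInt f p q ->
  (forall x, p < x < q -> c <= f x) -> (q - p) * c <= RInt f p q.
Proof.
intros pq Hf Hc.
replace ((q - p) * c) with (RInt (fun _ => c) p q) by (rewrite RInt_const; reflexivity).
apply RInt_le; [exact pq|apply ex_RInt_const|exact Hf|exact Hc].
Qed.

(* Continuous extension to R of functions on [a, b], as [RInt_bounded_cvg]
   requires continuity everywhere. *)
Definition clamp (a b x : R) : R := Rmax a (Rmin b x).

Lemma clamp_between a b x : a <= b -> a <= clamp a b x <= b.
Proof. intros ab. unfold clamp, Rmax, Rmin. repeat destruct Rle_dec; lra. Qed.

Lemma clamp_id a b x : a <= x <= b -> clamp a b x = x.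
Proof. intros ab. unfold clamp, Rmax, Rmin. repeat destruct Rle_dec; lra. Qed.

Lemma clamp_continuous a b x : a <= b -> continuous (clamp a b) x.
Proof.
intros ab. apply filterlim_locally. intros eps.
exists eps. intros y Hy. apply Rle_lt_trans with (2 := Hy).
change (Rabs (clamp a b y - clamp a b x) <= Rabs (y - x)).
unfold clamp, Rmax, Rmin. repeat destruct Rle_dec; unfold Rabs; repeat destruct Rcase_abs; lra.
Qed.

(** * Bounded convergence *)

Module BoundedConvergence.
Import all_boot all_order all_algebra all_classical all_reals all_analysis.
Import Rstruct Rstruct_topology.
Import Order.TTheory GRing.Theory Num.Theory numFieldNormedType.Exports.
Local Open Scope classical_set_scope.
Local Open Scope ring_scope.

Local Notation RR := (Rdefinitions.R : realType).

Lemma derivable_pt_lim_derive (f : RR -> RR) (x l : RR) :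
  derivable_pt_lim f x l -> derivable f x 1 /\ derive f x 1 = l.
Proof.
move=> Hd.
have H : h^-1 *: ((f \o shift x) (h *: (1:RR)) - f x) @[h --> 0^'] --> l.
  apply/cvgrPdist_lt => e /RltP e0.
  have [d Hdd] := Hd e e0.
  apply/nbhs_ballP; exists (pos d); first by apply/RltP; apply: cond_pos.
  move=> y /= Hy /eqP yn0.
  have Hy' : (Rabs y < d)%coqR by rewrite /ball /= sub0r normrN in Hy; apply/RltP.
  apply/RltP; rewrite distrC /GRing.scale /= mulr1 (addrC y x) mulrC.
  exact: Hdd y yn0 Hy'.
by split; [apply/cvg_ex; exists l | exact: cvg_lim].
Qed.

Lemma RInt_lebesgue (f : RR -> RR) (a b : RR) : (a < b)%coqR -> (forall x, continuity_pt f x) ->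
  (\int[lebesgue_measure]_(x in `[a, b]) (f x)%:E)%E = (RInt f a b)%:E.
Proof.
move=> ab cf.
pose F x := RInt f a x.
have dF x : derivable_pt_lim F x (f x).
  apply/is_derive_Reals/(is_derive_RInt f F a x); last exact/continuity_pt_filterlim.
  exists (mkposreal 1 Rlt_0_1) => y _; apply: RInt_correct.
  by apply: ex_RInt_continuous => z _; apply/continuity_pt_filterlim.
have cF x : {for x, continuous F}.
  by apply/continuity_pt_cvg; apply: derivable_continuous_pt; exists (f x); exact: dF.
rewrite (@continuous_FTC2 _ f F a b).
- by rewrite /F RInt_point -EFinD subr0.
- exact/RltP.
- by apply: continuous_subspaceT => x; apply/continuity_pt_cvg.
- split.
  + by move=> x _; case: (derivable_pt_lim_derive _ _ _ (dF x)).
  + exact: cvg_at_right_filter (cF a).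
  + exact: cvg_at_left_filter (cF b).
- by move=> x _; rewrite derive1E; exact: (derivable_pt_lim_derive _ _ _ (dF x)).2.
Qed.

Lemma Un_cv_cvg (u : nat -> RR) (l : RR) : Un_cv u l <-> u n @[n --> \oo] --> l.
Proof.
split=> [H | /cvgrPdist_lt H].
- apply/cvgrPdist_lt => e /RltP e0.
  have [N HN] := H e e0.
  by exists N => // n /= Hn; rewrite distrC; apply/RltP/HN/ssrnat.leP.
- move=> e /RltP e0; have [N _ HN] := H e e0.
  by exists N => n /ssrnat.leP Hn; move: (HN n Hn); rewrite distrC => /RltP.
Qed.

Lemma RInt_bounded_cvg (F : nat -> RR -> RR) (f : RR -> RR) (a b B : RR) : (a < b)%coqR ->
  (forall n x, continuity_pt (F n) x) -> (forall x, continuity_pt f x) ->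
  (forall n x, (Rabs (F n x) <= B)%coqR) ->
  (forall x, Un_cv (fun n => F n x) (f x)) ->
  Un_cv (fun n => RInt (F n) a b) (RInt f a b).
Proof.
move=> ab cF cf bF lF; apply/Un_cv_cvg.
have HL : (\int[lebesgue_measure]_(x in `[a, b]) (F n x)%:E)%E @[n --> \oo] -->
          (\int[lebesgue_measure]_(x in `[a, b]) (f x)%:E)%E.
  apply: (@dominated_cvg _ _ _ lebesgue_measure _ (measurable_itv _) _ _ (cst B%:E)).
  - move=> n; apply/measurable_realfun.measurable_EFinP/measurable_funTS.
    by apply: measurable_realfun.continuous_measurable_fun => x; apply/continuity_pt_cvg.
  - by move=> x _; apply: cvg_EFin; [apply: nearW | apply/Un_cv_cvg/lF].
  - by [].
  - apply: continuous_compact_integrable; first exact: segment_compact.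
    by apply: continuous_subspaceT => x; exact: cst_continuous.
  - by move=> n x _ /=; rewrite lee_fin; apply/RleP.
rewrite RInt_lebesgue // in HL.
suff HE : (RInt (F n) a b)%:E @[n --> \oo] --> (RInt f a b)%:E by exact: fine_cvg HE.
have -> : (fun n => (RInt (F n) a b)%:E) =
          (fun n => \int[lebesgue_measure]_(x in `[a, b]) (F n x)%:E)%E.
  by apply: funext => n; rewrite RInt_lebesgue.
exact: HL.
Qed.

End BoundedConvergence.

Lemma in_time_le (T : Rbar) s t : 0 <= s -> s <= t -> in_time T t -> in_time T s.
Proof. intros s0 st [_ Ht]. split; [exact s0|]. destruct T; simpl in *; auto; lra. Qed.

Lemma in_time_locally (T : Rbar) t : 0 < t -> in_time T t ->
  locally t (fun s => 0 < s /\ in_time T s).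
Proof.
intros t_pos [_ Ht]. destruct T as [T'| |]; simpl in Ht; try contradiction.
- exists (mkposreal _ (Rmin_pos t (T' - t) t_pos ltac:(lra))). intros s Hs.
  change (Rabs (s - t) < Rmin t (T' - t)) in Hs.
  assert (H1 := Rmin_l t (T' - t)). assert (H2 := Rmin_r t (T' - t)).
  apply Rabs_def2 in Hs. split; [lra|split; simpl; lra].
- exists (mkposreal t t_pos). intros s Hs. change (Rabs (s - t) < t) in Hs.
  apply Rabs_def2 in Hs. split; [lra|split; simpl; [lra|exact I]].
Qed.

Lemma in_time_sequence (T : Rbar) t0 : in_time T t0 -> exists tn : nat -> R,
  (forall n, in_time T (tn n) /\ t0 <= tn n) /\
  (forall s : R, Rbar_lt s T -> exists N, forall n, (N <= n)%nat -> s < tn n).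
Proof.
intros [h0 hT]. destruct T as [T'| |]; simpl in hT; try contradiction.
- exists (fun n => T' - (T' - t0) / (INR n + 1)). split.
  + intros n. assert (hn := pos_INR n).
    assert (0 < (T' - t0) / (INR n + 1)) by (apply Rdiv_lt_0_compat; lra).
    assert ((T' - t0) / (INR n + 1) <= T' - t0) by (apply Rle_div_l; nra).
    split; [split; simpl; lra|lra].
  + intros s Hs. simpl in Hs.
    destruct (INR_unbounded ((T' - t0) / (T' - s))) as [N HN].
    apply Rlt_div_l in HN; [|lra].
    exists N. intros n Hn. apply le_INR in Hn.
    enough ((T' - t0) / (INR n + 1) < T' - s) by lra.
    apply Rlt_div_l; [assert (hn := pos_INR n); lra|nra].
- exists (fun n => t0 + INR n). split.
  + intros n. assert (hn := pos_INR n). split; [split; simpl; [lra|exact I]|lra].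
  + intros s _. destruct (INR_unbounded (s - t0)) as [N HN].
    exists N. intros n Hn. apply le_INR in Hn. lra.
Qed.

Lemma integral_tail_small (T : Rbar) (f : R -> R) (C kappa : R) : Rbar_lt 0 T -> 0 < kappa ->
  (forall t, in_time T t -> 0 <= f t) ->
  (forall s, in_time T s -> ex_RInt f 0 s /\ RInt f 0 s <= C) ->
  exists t0, 0 < t0 /\ in_time T t0 /\
  forall t, in_time T t -> t0 <= t -> RInt f t0 t < kappa.
Proof.
intros HT k0 Hpos HC.
assert (Hex : forall s, in_time T s -> ex_RInt f 0 s) by (intros s hs; apply (HC s hs)).
assert (Hsplit : forall p q, 0 <= p -> p <= q -> in_time T q ->
          RInt f 0 q = RInt f 0 p + RInt f p q /\ 0 <= RInt f p q).
{ intros p q p0 pq hq.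
  assert (Hpq : ex_RInt f p q) by (apply (ex_RInt_Chasles_2 f 0); [lra|apply Hex, hq]).
  split.
  - symmetry. apply (RInt_Chasles f 0 p q); [|exact Hpq].
    apply Hex, in_time_le with q; assumption.
  - apply RInt_ge_0; [exact pq|exact Hpq|]. intros x Hx.
    apply Hpos, in_time_le with q; [lra|lra|exact hq]. }
destruct (completeness (fun r => exists s, in_time T s /\ r = RInt f 0 s)) as [L [HL1 HL2]].
{ exists C. intros r [s [hs ->]]. apply (HC s hs). }
{ exists (RInt f 0 0), 0. split; [split; [lra|exact HT]|reflexivity]. }
assert (Hs1 : exists s1, in_time T s1 /\ L - kappa < RInt f 0 s1).
{ apply NNPP; intro Hn. enough (L <= L - kappa) by lra.
  apply HL2. intros r [s [hs ->]]. apply Rnot_lt_le. intro Hlt. apply Hn. exists s. auto. }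
destruct Hs1 as [s1 [hs1 Hs1]].
destruct (in_time_sequence T s1 hs1) as [tn [Htn Hev]].
destruct (Hev s1 (proj2 hs1)) as [N HN].
specialize (HN N (le_n N)). destruct (Htn N) as [hN _].
exists (tn N). split; [destruct hs1; lra|split; [exact hN|]].
intros t ht hNt.
destruct (Hsplit s1 (tn N) ltac:(destruct hs1; lra) ltac:(lra) hN) as [E1 P1].
destruct (Hsplit (tn N) t ltac:(destruct hs1; lra) hNt ht) as [E2 _].
assert (RInt f 0 t <= L) by (apply HL1; exists t; auto).
lra.
Qed.

Lemma RInt_cvg_0_along (T : Rbar) (a b B : R) (h : R -> R -> R) (tn : nat -> R) : a < b ->
  (forall n, in_time T (tn n)) ->
  (forall s : R, Rbar_lt s T -> exists N, forall n, (N <= n)%nat -> s < tn n) ->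
  (forall x t, a <= x <= b -> in_time T t -> continuous (fun z => h z t) x) ->
  (forall x t, a <= x <= b -> in_time T t -> Rabs (h x t) <= B) ->
  (forall x, a <= x <= b -> lim_left_at (h x) T 0) ->
  Un_cv (fun n => RInt (fun x => h x (tn n)) a b) 0.
Proof.
intros ab Htn Hev Hc HB Hlim.
assert (Hcl := fun x => clamp_between a b x ltac:(lra)).
assert (Hcvg : Un_cv (fun n => RInt (fun x => h (clamp a b x) (tn n)) a b)
                     (RInt (fun _ => 0) a b)).
{ apply BoundedConvergence.RInt_bounded_cvg with B; [exact ab| | | |].
  - intros n x. apply continuity_pt_filterlim.
    apply (continuous_comp (clamp a b) (fun z => h z (tn n))); [apply clamp_continuous; lra|].
    apply Hc; [apply Hcl|apply Htn].
  - intros x. apply continuity_pt_const. intros u v. reflexivity.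
  - intros n x. apply HB; [apply Hcl|apply Htn].
  - intros x e e0. destruct (Hlim (clamp a b x) (Hcl x) e e0) as [s [_ [sT Hs]]].
    destruct (Hev s sT) as [N HN]. exists N. intros n Hn.
    apply Hs; [apply HN, Hn|apply Htn]. }
replace (RInt (fun _ => 0) a b) with 0 in Hcvg by (rewrite RInt_const; symmetry; apply Rmult_0_r).
intros eps e0. destruct (Hcvg eps e0) as [N HN]. exists N. intros n Hn.
rewrite <- (RInt_ext (fun x => h (clamp a b x) (tn n))); [apply HN, Hn|].
intros x Hx. rewrite Rmin_left, Rmax_right in Hx by lra. rewrite clamp_id; [reflexivity|lra].
Qed.

(** * Fronts transported by the flow *)

Section Fronts.

Variables (T : Rbar) (a b : R).
Hypothesis Hab : a < b.

Definition C1_at_rect (f : R -> R -> R) : Prop :=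
  forall x t, a <= x <= b -> in_time T t ->
  continuous (uncurry2 f) (x, t) /\ ex_derive (fun z => f z t) x /\
  ex_derive (fun z => f x z) t /\
  continuous (uncurry2 (d_x1 f)) (x, t) /\ continuous (uncurry2 (d_t f)) (x, t).

Lemma C1_continuous_x f : C1_at_rect f -> forall x t, a <= x <= b -> in_time T t ->
  continuous (fun z => f z t) x.
Proof. intros Hf x t hx ht. apply continuous_uncurry2_l, (Hf x t hx ht). Qed.

Lemma C1_ex_RInt_x f : C1_at_rect f -> forall p q t, a <= p -> p <= q -> q <= b ->
  in_time T t -> ex_RInt (fun x => f x t) p q.
Proof.
intros Hf p q t ap pq qb ht. apply (@ex_RInt_continuous R_CompleteNormedModule).
intros z Hz. rewrite Rmin_left, Rmax_right in Hz by lra. apply C1_continuous_x; auto; lra.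
Qed.

Lemma C1_bounded_x f : C1_at_rect f -> forall t, in_time T t ->
  exists K, forall x, a <= x <= b -> Rabs (f x t) <= K.
Proof.
intros Hf t ht. destruct (bounded_continuity (fun z => f z t) a b) as [K HK].
- intros x hx. apply C1_continuous_x; assumption.
- exists K. intros x hx. left. apply HK, hx.
Qed.

Lemma C1_is_derive_RInt f : C1_at_rect f -> forall p q t, a <= p -> p <= q -> q <= b ->
  0 < t -> in_time T t ->
  is_derive (fun s => RInt (fun x => f x s) p q) t (RInt (fun x => d_t f x t) p q).
Proof.
intros Hf p q t ap pq qb t_pos ht.
assert (Hloc := in_time_locally T t t_pos ht).
apply (is_derive_RInt_param (fun s x => f x s)).
- revert Hloc; apply filter_imp. intros s [_ hs] x Hx.
  rewrite Rmin_left, Rmax_right in Hx by lra. apply (Hf x s); [lra|exact hs].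
- intros x Hx. rewrite Rmin_left, Rmax_right in Hx by lra.
  apply (continuity_2d_pt_swap (d_t f)), (Hf x t ltac:(lra) ht).
- revert Hloc; apply filter_imp. intros s [_ hs]. apply C1_ex_RInt_x; assumption.
Qed.

Variable psi : R -> R -> R -> R.
Hypothesis Hpsi : forall l x y t, in_time T t ->
  continuous (uncurry3 (iter_pd3 l psi)) (x, y, t) /\ forall i, ex_pd3 i (iter_pd3 l psi) x y t.

Definition moves_with_flow (f : R -> R -> R) : Prop :=
  forall x1 t, a <= x1 <= b -> in_time T t ->
  vel2 psi x1 (f x1 t) t = d_x1 f x1 t * vel1 psi x1 (f x1 t) t + d_t f x1 t.

Lemma stream_differentiable x y t : in_time T t ->
  differentiable_pt_lim (fun u v => psi u v t) x y (vel2 psi x y t) (- vel1 psi x y t).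
Proof.
intros ht. apply filterdiff_differentiable_pt_lim.
unfold vel1, vel2; rewrite Ropp_involutive.
apply (is_derive_filterdiff (fun u v => psi u v t) x y (fun u v => pd3 0 psi u v t)).
- apply filter_forall. intros [u v]. apply Derive_correct, (proj2 (Hpsi nil u v t ht) 0%nat).
- apply Derive_correct, (proj2 (Hpsi nil x y t ht) 1%nat).
- apply (continuous_uncurry3_slice (pd3 0 psi)), (proj1 (Hpsi (0%nat :: nil) x y t ht)).
Qed.

(* Chain rule: d_x1 psi + d_x2 psi * d_x1 f = u2 - u1 * d_x1 f, which is d_t f
   by transport. *)
Lemma stream_along_front_derive f : C1_at_rect f -> moves_with_flow f ->
  forall x t, a <= x <= b -> in_time T t -> is_derive (fun z => psi z (f z t) t) x (d_t f x t).
Proof.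
intros Hf Hflow x t hx ht.
apply is_derive_Reals.
replace (d_t f x t) with (vel2 psi x (f x t) t * 1 + - vel1 psi x (f x t) t * d_x1 f x t)
  by (rewrite (Hflow x t hx ht); ring).
apply (derivable_pt_lim_comp_2d (fun u v => psi u v t) (fun z => z) (fun z => f z t)).
- apply stream_differentiable, ht.
- apply derivable_pt_lim_id.
- apply is_derive_Reals, Derive_correct, (Hf x t hx ht).
Qed.

Lemma stream_along_front_continuous f : C1_at_rect f ->
  forall x t, a <= x <= b -> in_time T t -> continuous (fun s => psi x (f x s) s) t.
Proof.
intros Hf x t hx ht.
apply (continuous_comp (fun s => (x, f x s, s)) (uncurry3 psi)).
- apply continuous_pair; [apply continuous_pair|apply continuous_id].
  + apply continuous_const.
  + apply continuous_uncurry2_r, (Hf x t hx ht).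
- exact (proj1 (Hpsi nil x (f x t) t ht)).
Qed.

Lemma stream_velocity_bounded t K : in_time T t -> 0 <= K ->
  exists M, forall x y, a <= x <= b -> - K <= y <= K -> vel_norm psi x y t <= M.
Proof.
intros ht K0.
assert (Hbd : forall i, exists M, forall x y, a <= x <= b -> - K <= y <= K ->
          Rabs (pd3 i psi x y t) <= M).
{ intros i. apply rectangle_bounded; [lra|lra|].
  intros x y _ _. apply (continuous_uncurry3_slice (pd3 i psi)), (Hpsi (i :: nil) x y t ht). }
destruct (Hbd 0%nat) as [M0 H0]. destruct (Hbd 1%nat) as [M1 H1].
exists (sqrt 2 * Rmax M0 M1). intros x y hx hy.
apply Rle_trans with (1 := proj2 (sqrt_plus_sqr _ _)).
apply Rmult_le_compat_l; [apply sqrt_pos|].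
unfold vel1, vel2. rewrite Rabs_Ropp. apply Rmax_lub.
- apply Rle_trans with M1; [apply H1|apply Rmax_r]; assumption.
- apply Rle_trans with M0; [apply H0|apply Rmax_l]; assumption.
Qed.

Variables fm fp : R -> R -> R.
Hypotheses (Hfm : C1_at_rect fm) (Hfp : C1_at_rect fp).
Hypothesis Hord : forall x t, a <= x <= b -> in_time T t -> fm x t < fp x t.

Definition gap x t := fp x t - fm x t.
Definition flux x t := psi x (fp x t) t - psi x (fm x t) t.
Local Notation U := (vel_sup psi a b fm fp).

Lemma gap_continuous x t : a <= x <= b -> in_time T t -> continuous (uncurry2 gap) (x, t).
Proof.
intros hx ht. apply (@continuous_minus (prod_UniformSpace R_UniformSpace R_UniformSpace)
  R_AbsRing R_NormedModule (uncurry2 fp) (uncurry2 fm));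
  [apply (Hfp x t)|apply (Hfm x t)]; assumption.
Qed.

Lemma gap_ex_RInt p q t : a <= p -> p <= q -> q <= b -> in_time T t ->
  ex_RInt (fun x => gap x t) p q.
Proof.
intros ap pq qb ht. apply (@ex_RInt_minus R_NormedModule); apply C1_ex_RInt_x; assumption.
Qed.

(* [vel_sup] is [real] of a [Lub_Rbar], a junk 0 if the set were unbounded;
   continuity of the velocity on the compact region between the arcs excludes
   this. *)
Lemma vel_sup_spec t : in_time T t -> 0 <= U t /\
  forall x y, a <= x <= b -> fm x t <= y <= fp x t -> vel_norm psi x y t <= U t.
Proof.
intros ht.
destruct (C1_bounded_x fm Hfm t ht) as [Km HKm].
destruct (C1_bounded_x fp Hfp t ht) as [Kp HKp].
destruct (stream_velocity_bounded t (Rabs Km + Rabs Kp) ht) as [M HM].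
{ assert (H1 := Rabs_pos Km). assert (H2 := Rabs_pos Kp). lra. }
set (E := fun r => exists x1 x2, a <= x1 <= b /\ fm x1 t <= x2 <= fp x1 t /\
                    r = vel_norm psi x1 x2 t).
assert (Ea : E (vel_norm psi a (fm a t) t)).
{ exists a, (fm a t). split; [lra|]. split; [|reflexivity].
  split; [lra|]. left; apply Hord; [lra|exact ht]. }
assert (HE : forall r, E r -> r <= real (Lub_Rbar E)).
{ apply (Lub_Rbar_real_ub E _ M Ea). intros r [x1 [x2 [hx [hy ->]]]]. apply HM; [exact hx|].
  assert (Bm := proj1 (Rabs_le_between _ _) (HKm x1 hx)).
  assert (Bp := proj1 (Rabs_le_between _ _) (HKp x1 hx)).
  assert (Rm := Rle_abs Km). assert (Rp := Rle_abs Kp).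
  assert (Pm := Rabs_pos Km). assert (Pp := Rabs_pos Kp). lra. }
split.
- apply Rle_trans with (2 := HE _ Ea). apply sqrt_pos.
- intros x y hx hy. apply HE. exists x, y. auto.
Qed.

Lemma flux_bound x t : a <= x <= b -> in_time T t -> Rabs (flux x t) <= U t * gap x t.
Proof.
intros hx ht.
assert (hlt := Hord x t hx ht).
assert (Hd : forall z, ex_derive (fun y => psi x y t) z) by
  (intros z; exact (proj2 (Hpsi nil x z t ht) 1%nat)).
destruct (MVT_gen (fun y => psi x y t) (fm x t) (fp x t) (fun y => pd3 1 psi x y t))
  as [c [hc Hc]].
- intros z _. apply Derive_correct, Hd.
- intros z _. apply continuity_pt_filterlim.
  exact (@ex_derive_continuous R_AbsRing R_NormedModule _ z (Hd z)).
rewrite Rmin_left, Rmax_right in hc by lra.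
unfold flux, gap. rewrite Hc, Rabs_mult, (Rabs_pos_eq (fp x t - fm x t)) by lra.
apply Rmult_le_compat_r; [lra|].
apply Rle_trans with (vel_norm psi x c t); [|apply (proj2 (vel_sup_spec t ht)); assumption].
unfold vel_norm. apply Rle_trans with (2 := proj1 (sqrt_plus_sqr _ _)).
unfold vel1. rewrite Rabs_Ropp. apply Rmax_l.
Qed.

Lemma flux_continuous x t : a <= x <= b -> in_time T t -> continuous (flux x) t.
Proof.
intros hx ht.
apply (@continuous_minus R_UniformSpace R_AbsRing R_NormedModule);
  apply stream_along_front_continuous; assumption.
Qed.

Hypotheses (Hflow_m : moves_with_flow fm) (Hflow_p : moves_with_flow fp).

Lemma RInt_d_t_gap p q t : a <= p -> p <= q -> q <= b -> in_time T t ->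
  RInt (fun x => d_t fp x t - d_t fm x t) p q = flux q t - flux p t.
Proof.
intros ap pq qb ht.
apply is_RInt_unique, (is_RInt_derive (fun x => flux x t)).
- intros x Hx. rewrite Rmin_left, Rmax_right in Hx by lra.
  apply (@is_derive_minus R_AbsRing R_NormedModule); apply stream_along_front_derive;
    try assumption; lra.
- intros x Hx. rewrite Rmin_left, Rmax_right in Hx by lra.
  apply (@continuous_minus R_UniformSpace R_AbsRing R_NormedModule);
    apply continuous_uncurry2_l; [apply (Hfp x t)|apply (Hfm x t)]; try assumption; lra.
Qed.

Lemma gap_area_derive p q t : a <= p -> p <= q -> q <= b -> 0 < t -> in_time T t ->
  is_derive (fun s => RInt (fun x => gap x s) p q) t (flux q t - flux p t).
Proof.
intros ap pq qb t_pos ht.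
rewrite <- RInt_d_t_gap by assumption.
rewrite (RInt_minus (V := R_CompleteNormedModule)).
2, 3: apply (@ex_RInt_continuous R_CompleteNormedModule); intros x Hx;
  rewrite Rmin_left, Rmax_right in Hx by lra; apply continuous_uncurry2_l;
  first [apply (Hfp x t) | apply (Hfm x t)]; try assumption; lra.
apply (is_derive_ext_loc (fun s => RInt (fun x => fp x s) p q - RInt (fun x => fm x s) p q)).
- apply (filter_imp (fun s => 0 < s /\ in_time T s)); [|apply in_time_locally; assumption].
  intros s [_ hs]. unfold gap. symmetry.
  apply (@RInt_minus R_CompleteNormedModule); apply C1_ex_RInt_x; assumption.
- apply (@is_derive_minus R_AbsRing R_NormedModule); apply C1_is_derive_RInt; assumption.
Qed.

Lemma gap_area_change p q u v : a <= p -> p <= q -> q <= b -> 0 < u -> u <= v -> in_time T v ->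
  RInt (fun x => gap x v) p q - RInt (fun x => gap x u) p q =
  RInt (fun s => flux q s - flux p s) u v.
Proof.
intros ap pq qb u0 uv hv. symmetry. apply is_RInt_unique.
apply (is_RInt_derive (fun s => RInt (fun x => gap x s) p q)).
- intros s Hs. rewrite Rmin_left, Rmax_right in Hs by lra.
  apply gap_area_derive; try assumption; [lra|apply in_time_le with v; [lra|lra|exact hv]].
- intros s Hs. rewrite Rmin_left, Rmax_right in Hs by lra.
  assert (hs : in_time T s) by (apply in_time_le with v; [lra|lra|exact hv]).
  apply (@continuous_minus R_UniformSpace R_AbsRing R_NormedModule);
    apply flux_continuous; try assumption; lra.
Qed.

Hypothesis HU : forall s, in_time T s -> ex_RInt U 0 s.

Lemma ex_RInt_U u v : in_time T u -> in_time T v -> ex_RInt U u v.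
Proof.
intros hu hv. apply (ex_RInt_Chasles U u 0 v); [apply ex_RInt_swap|]; apply HU; assumption.
Qed.

Lemma RInt_U_nonneg u v : 0 <= u -> u <= v -> in_time T v -> 0 <= RInt U u v.
Proof.
intros u0 uv hv. assert (hu : in_time T u) by (apply in_time_le with v; assumption).
apply RInt_ge_0; [exact uv|apply ex_RInt_U; assumption|].
intros s Hs. apply vel_sup_spec, in_time_le with v; [lra|lra|exact hv].
Qed.

Lemma flux_integral_lower p q u v A B : a <= p <= b -> a <= q <= b -> 0 <= u -> u <= v ->
  in_time T v -> (forall s, u <= s <= v -> gap p s <= A /\ gap q s <= B) ->
  - (A + B) * RInt U u v <= RInt (fun s => flux q s - flux p s) u v.
Proof.
intros hp hq u0 uv hv HAB.
assert (hs : forall s, u <= s <= v -> in_time T s) by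
  (intros s Hs; apply in_time_le with v; [lra|lra|exact hv]).
assert (HUuv : ex_RInt U u v) by (apply ex_RInt_U; [apply hs; lra|exact hv]).
change (scal (- (A + B)) (RInt U u v) <= RInt (fun s => flux q s - flux p s) u v).
rewrite <- (RInt_scal (V := R_CompleteNormedModule) U u v (- (A + B)) HUuv).
apply RInt_le; [exact uv|apply (ex_RInt_scal (V := R_NormedModule)), HUuv| |].
- apply (@ex_RInt_continuous R_CompleteNormedModule). intros z Hz.
  rewrite Rmin_left, Rmax_right in Hz by lra.
  apply (@continuous_minus R_UniformSpace R_AbsRing R_NormedModule);
    apply flux_continuous; try assumption; apply hs, Hz.
- intros z Hz. assert (hz : in_time T z) by (apply hs; lra).
  destruct (HAB z ltac:(lra)) as [HA HB].
  assert (Fp := proj1 (Rabs_le_between _ _) (flux_bound p z hp hz)).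
  assert (Fq := proj1 (Rabs_le_between _ _) (flux_bound q z hq hz)).
  assert (Uz := proj1 (vel_sup_spec z hz)).
  assert (U z * gap p z <= U z * A) by (apply Rmult_le_compat_l; assumption).
  assert (U z * gap q z <= U z * B) by (apply Rmult_le_compat_l; assumption).
  change (- (A + B) * U z <= flux q z - flux p z). lra.
Qed.

Variable t0 : R.
Hypotheses (t0_pos : 0 < t0) (t0_time : in_time T t0).

(* The window [window_lo t, window_hi t] widens at speed U on each side, so its
   area gains at least U * gap at each end, which dominates |flux| <= U * gap. *)
Definition drift t := RInt U t0 t.
Definition quarter := (b - a) / 4.
Definition window_lo t := (a + b) / 2 - quarter - drift t.
Definition window_hi t := (a + b) / 2 + quarter + drift t.
Definition window_area t := RInt (fun x => gap x t) (window_lo t) (window_hi t).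

Hypothesis drift_small : forall t, in_time T t -> t0 <= t -> drift t < quarter.

Lemma drift_t0 : drift t0 = 0.
Proof. unfold drift. rewrite RInt_point. reflexivity. Qed.

Lemma drift_increment u v : in_time T u -> in_time T v -> drift v - drift u = RInt U u v.
Proof.
intros hu hv. unfold drift.
rewrite <- (RInt_Chasles U t0 u v) by (apply ex_RInt_U; assumption).
change (RInt U t0 u + RInt U u v - RInt U t0 u = RInt U u v). ring.
Qed.

Lemma drift_continuous s : 0 < s -> in_time T s -> continuous drift s.
Proof.
intros s0 hs. apply (continuous_RInt_1 U t0 s drift).
apply (filter_imp (fun z => 0 < z /\ in_time T z)); [|apply in_time_locally; assumption].
intros z [_ hz]. apply (RInt_correct (V := R_CompleteNormedModule)), ex_RInt_U; assumption.
Qed.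

Lemma window_inside t : in_time T t -> t0 <= t ->
  a < window_lo t /\ window_lo t <= window_hi t /\ window_hi t < b.
Proof.
intros ht h0.
assert (D := drift_small t ht h0).
assert (D0 : 0 <= drift t) by (apply RInt_U_nonneg; [lra|exact h0|exact ht]).
unfold window_lo, window_hi, quarter in *. lra.
Qed.

Lemma window_area_change u v : t0 <= u -> u <= v -> in_time T v ->
  window_area v - window_area u =
  RInt (fun x => gap x v) (window_lo v) (window_lo u) +
  RInt (fun x => gap x v) (window_hi u) (window_hi v) +
  RInt (fun s => flux (window_hi u) s - flux (window_lo u) s) u v.
Proof.
intros h0 uv hv.
assert (hu : in_time T u) by (apply in_time_le with v; [lra|exact uv|exact hv]).
destruct (window_inside u hu h0) as [Lu [LHu Hu]].
destruct (window_inside v hv ltac:(lra)) as [Lv [LHv Hv]].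
assert (Dv : drift u <= drift v).
{ assert (H := RInt_U_nonneg u v ltac:(lra) uv hv). rewrite <- drift_increment in H by assumption.
  lra. }
rewrite <- (gap_area_change (window_lo u) (window_hi u) u v) by (lra || assumption).
unfold window_area.
set (G := fun x => gap x v).
assert (E1 : RInt G (window_lo v) (window_hi v) =
             RInt G (window_lo v) (window_lo u) + RInt G (window_lo u) (window_hi v)).
{ symmetry. apply (RInt_Chasles (V := R_CompleteNormedModule)); apply gap_ex_RInt;
    unfold window_lo, window_hi in *; lra || assumption. }
assert (E2 : RInt G (window_lo u) (window_hi v) =
             RInt G (window_lo u) (window_hi u) + RInt G (window_hi u) (window_hi v)).
{ symmetry. apply (RInt_Chasles (V := R_CompleteNormedModule)); apply gap_ex_RInt;
    unfold window_lo, window_hi in *; lra || assumption. }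
rewrite E1, E2. ring.
Qed.

Lemma window_area_increment_lower u v gA gB eta : t0 <= u -> u <= v -> in_time T v ->
  (forall x z, window_lo v <= x <= window_lo u -> u <= z <= v -> gA - eta <= gap x z <= gA + eta) ->
  (forall x z, window_hi u <= x <= window_hi v -> u <= z <= v -> gB - eta <= gap x z <= gB + eta) ->
  window_area u - 4 * eta * (drift v - drift u) <= window_area v.
Proof.
intros h0 uv hv HA HB.
assert (hu : in_time T u) by (apply in_time_le with v; [lra|exact uv|exact hv]).
destruct (window_inside u hu h0) as [Lu [LHu Hu]].
destruct (window_inside v hv ltac:(lra)) as [Lv [LHv Hv]].
assert (D := drift_increment u v hu hv).
assert (D0 := RInt_U_nonneg u v ltac:(lra) uv hv).
assert (Hlo : window_lo v <= window_lo u) by (unfold window_lo; lra).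
assert (Hhi : window_hi u <= window_hi v) by (unfold window_hi; lra).
assert (Edge_lo : (drift v - drift u) * (gA - eta) <=
                  RInt (fun x => gap x v) (window_lo v) (window_lo u)).
{ replace (drift v - drift u) with (window_lo u - window_lo v) by (unfold window_lo; ring).
  apply RInt_ge_const; [exact Hlo|apply gap_ex_RInt; try assumption; lra|].
  intros x Hx. apply (HA x v); lra. }
assert (Edge_hi : (drift v - drift u) * (gB - eta) <=
                  RInt (fun x => gap x v) (window_hi u) (window_hi v)).
{ replace (drift v - drift u) with (window_hi v - window_hi u) by (unfold window_hi; ring).
  apply RInt_ge_const; [exact Hhi|apply gap_ex_RInt; try assumption; lra|].
  intros x Hx. apply (HB x v); lra. }
assert (Middle : - ((gA + eta) + (gB + eta)) * (drift v - drift u) <=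
          RInt (fun z => flux (window_hi u) z - flux (window_lo u) z) u v).
{ rewrite D. apply flux_integral_lower; try lra; [exact hv|].
  intros z Hz. split; [apply (HA (window_lo u) z)|apply (HB (window_hi u) z)]; lra. }
assert (Change := window_area_change u v h0 uv hv).
assert (Sum : (drift v - drift u) * (gA - eta) + (drift v - drift u) * (gB - eta)
              - ((gA + eta) + (gB + eta)) * (drift v - drift u) = - 4 * eta * (drift v - drift u))
  by ring.
lra.
Qed.

(* [drift] is only the integral of an integrable function, so [window_area] need
   not be differentiable; monotonicity comes from this local estimate with
   slack [eps * drift] through [nondecreasing_of_locally]. *)
Lemma window_area_local t1 eps : in_time T t1 -> 0 < eps -> forall s, t0 <= s <= t1 ->
  exists d, 0 < d /\ forall u v, s - d < u -> u <= s -> s <= v -> v < s + d ->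
  t0 <= u -> v <= t1 -> window_area u + eps * drift u <= window_area v + eps * drift v.
Proof.
intros ht1 e0 s hs.
assert (hst : in_time T s) by (apply in_time_le with t1; [lra|lra|exact ht1]).
destruct (window_inside s hst (proj1 hs)) as [Ls [LHs Hs]].
destruct (continuous2_eps gap (window_lo s) s
  (gap_continuous (window_lo s) s ltac:(lra) hst) (eps / 4)) as [dA [dA0 HA]]; [lra|].
destruct (continuous2_eps gap (window_hi s) s
  (gap_continuous (window_hi s) s ltac:(lra) hst) (eps / 4)) as [dB [dB0 HB]]; [lra|].
set (del := Rmin dA dB).
assert (del0 : 0 < del) by (apply Rmin_pos; assumption).
assert (HdA : del <= dA) by apply Rmin_l. assert (HdB : del <= dB) by apply Rmin_r.
destruct (continuous_eps drift s (drift_continuous s ltac:(lra) hst) del del0) as [dV [dV0 HV]].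
exists (Rmin del dV). split; [apply Rmin_pos; assumption|].
intros u v Hu1 Hu2 Hv1 Hv2 Hu0 Hv0.
assert (Hmin1 := Rmin_l del dV). assert (Hmin2 := Rmin_r del dV).
assert (hv : in_time T v) by (apply in_time_le with t1; [lra|lra|exact ht1]).
assert (hu : in_time T u) by (apply in_time_le with v; [lra|lra|exact hv]).
assert (Dsu := RInt_U_nonneg u s ltac:(lra) Hu2 hst).
assert (Dvs := RInt_U_nonneg s v ltac:(lra) Hv1 hv).
rewrite <- drift_increment in Dsu, Dvs by assumption.
assert (Ku := proj1 (Rabs_lt_between' _ _ _) (HV u ltac:(apply Rabs_lt_between'; lra))).
assert (Kv := proj1 (Rabs_lt_between' _ _ _) (HV v ltac:(apply Rabs_lt_between'; lra))).
assert (Hinc := window_area_increment_lower u v (gap (window_lo s) s) (gap (window_hi s) s)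
  (eps / 4) Hu0 ltac:(lra) hv).
cut (window_area u - 4 * (eps / 4) * (drift v - drift u) <= window_area v); [lra|].
apply Hinc; intros x z Hx Hz; apply Rabs_le_between', Rlt_le; [apply HA|apply HB];
  apply Rabs_lt_between'; unfold window_lo, window_hi in *; lra.
Qed.

Lemma window_area_nondecreasing t : in_time T t -> t0 <= t -> window_area t0 <= window_area t.
Proof.
intros ht h0.
assert (Dt : 0 <= drift t) by (apply RInt_U_nonneg; [lra|exact h0|exact ht]).
apply Rle_plus_epsilon. intros eps e0.
set (eps' := eps / (drift t + 1)).
assert (e0' : 0 < eps') by (unfold eps'; apply Rdiv_lt_0_compat; lra).
assert (Hmono := nondecreasing_of_locally (fun s => window_area s + eps' * drift s) t0 t h0
  (window_area_local t eps' ht e0')).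
cbv beta in Hmono. rewrite drift_t0 in Hmono.
assert (eps' * drift t <= eps).
{ apply Rle_trans with (eps' * (drift t + 1)); [apply Rmult_le_compat_l; lra|].
  right; unfold eps'; field; lra. }
lra.
Qed.

Lemma window_area_t0_pos : 0 < window_area t0.
Proof.
destruct (window_inside t0 t0_time (Rle_refl t0)) as [L [_ H]].
unfold window_area. apply RInt_gt_0.
- unfold window_lo, window_hi, quarter. rewrite drift_t0. lra.
- intros x Hx. unfold gap. apply Rlt_0_minus, Hord; [lra|exact t0_time].
- intros x Hx. apply continuous_uncurry2_l, gap_continuous; [lra|exact t0_time].
Qed.

Lemma window_area_le_gap_integral t : in_time T t -> t0 <= t ->
  window_area t <= RInt (fun x => gap x t) a b.
Proof.
intros ht h0. destruct (window_inside t ht h0) as [L [LH H]].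
assert (Hnn : forall p q, a <= p -> p <= q -> q <= b -> 0 <= RInt (fun x => gap x t) p q).
{ intros p q ap pq qb. apply RInt_ge_0; [exact pq|apply gap_ex_RInt; assumption|].
  intros x Hx. unfold gap. apply Rlt_le, Rlt_0_minus, Hord; [lra|exact ht]. }
assert (Ha := Hnn a (window_lo t) ltac:(lra) ltac:(lra) ltac:(lra)).
assert (Hb := Hnn (window_hi t) b ltac:(lra) ltac:(lra) ltac:(lra)).
set (G := fun x => gap x t).
assert (E1 : RInt G a b = RInt G a (window_lo t) + RInt G (window_lo t) b).
{ symmetry. apply (RInt_Chasles (V := R_CompleteNormedModule));
    apply gap_ex_RInt; lra || assumption. }
assert (E2 : RInt G (window_lo t) b = window_area t + RInt G (window_hi t) b).
{ symmetry. apply (RInt_Chasles (V := R_CompleteNormedModule));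
    apply gap_ex_RInt; lra || assumption. }
rewrite E1, E2. unfold G. lra.
Qed.

Lemma gap_integral_bounded_below : exists c, 0 < c /\
  forall t, in_time T t -> t0 <= t -> c <= RInt (fun x => gap x t) a b.
Proof.
exists (window_area t0). split; [exact window_area_t0_pos|].
intros t ht h0. apply Rle_trans with (window_area t).
- apply window_area_nondecreasing; assumption.
- apply window_area_le_gap_integral; assumption.
Qed.

End Fronts.

Lemma C1_at_rect_of_C1_on_rect T a b f : C1_on_rect a b T f -> C1_at_rect T a b f.
Proof. intros [O [HO [_ HOf]]] x t hx ht. apply HOf, HO; assumption. Qed.

Lemma smooth_on_strip_pd T psi : smooth_on_strip T psi -> forall l x y t, in_time T t ->
  continuous (uncurry3 (iter_pd3 l psi)) (x, y, t) /\ forall i, ex_pd3 i (iter_pd3 l psi) x y t.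
Proof. intros [O [HO [_ HOs]]] l x y t ht. apply HOs, HO, ht. Qed.

Theorem theorem1 (T : Rbar) (psi : R -> R -> R -> R) (a b : R)
  (fm fp : R -> R -> R) :
  Rbar_lt (Finite 0) T ->
  smooth_on_strip T psi ->
  a < b ->
  C1_on_rect a b T fm ->
  C1_on_rect a b T fp ->
  (* (i) *)
  (forall x1 t, a <= x1 <= b -> in_time T t -> fm x1 t < fp x1 t) ->
  (* (ii) the arcs x2 = f_pm(x1,t) move with the fluid *)
  (forall x1 t, a <= x1 <= b -> in_time T t ->
     vel2 psi x1 (fp x1 t) t = d_x1 fp x1 t * vel1 psi x1 (fp x1 t) t + d_t fp x1 t) ->
  (forall x1 t, a <= x1 <= b -> in_time T t ->
     vel2 psi x1 (fm x1 t) t = d_x1 fm x1 t * vel1 psi x1 (fm x1 t) t + d_t fm x1 t) ->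
  (* (iii) int_0^T sup |u| dt < oo *)
  (exists C : R, forall s : R, in_time T s ->
     ex_RInt (vel_sup psi a b fm fp) 0 s /\ RInt (vel_sup psi a b fm fp) 0 s <= C) ->
  ~ ((exists B : R, forall x1 t, a <= x1 <= b -> in_time T t ->
        Rabs (fp x1 t - fm x1 t) <= B) /\
     (forall x1, a <= x1 <= b -> lim_left_at (fun t => fp x1 t - fm x1 t) T 0)).
Proof.
intros HT Hsm Hab Cm Cp Hord Hflow_p Hflow_m [C HC] [[B HB] Hlim].
assert (Hpsi := smooth_on_strip_pd T psi Hsm).
assert (Hfm := C1_at_rect_of_C1_on_rect T a b fm Cm).
assert (Hfp := C1_at_rect_of_C1_on_rect T a b fp Cp).
assert (HU : forall s, in_time T s -> ex_RInt (vel_sup psi a b fm fp) 0 s)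
  by (intros s hs; apply (HC s hs)).
destruct (integral_tail_small T (vel_sup psi a b fm fp) C (quarter a b) HT)
  as [t0 [t0_pos [t0_time Hsmall]]]; [unfold quarter; lra| |exact HC|].
{ intros t ht. apply (vel_sup_spec T a b Hab psi Hpsi fm fp Hfm Hfp Hord t ht). }
destruct (gap_integral_bounded_below T a b Hab psi Hpsi fm fp Hfm Hfp Hord Hflow_m Hflow_p HU
  t0 t0_pos t0_time Hsmall) as [c [c0 Hc]].
destruct (in_time_sequence T t0 t0_time) as [tn [Htn Hev]].
destruct (RInt_cvg_0_along T a b B (gap fm fp) tn Hab (fun n => proj1 (Htn n)) Hev) with c
  as [N HN]; [|exact HB|exact Hlim|exact c0|].
{ intros x t hx ht. apply continuous_uncurry2_l, (gap_continuous T a b); assumption. }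
specialize (HN N (le_n N)). destruct (Htn N) as [hN hN0].
assert (Hlow := Hc (tn N) hN hN0).
unfold R_dist in HN. rewrite Rminus_0_r in HN. apply Rabs_def2 in HN. lra.
Qed.
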